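(* Suppose A1–A3 hold and that $\nu_k\to0$. Let $C>0$ be such that $\nu_k\le C$ for all $k$, and for each $\delta>0$ let $k_0(\delta)$ be a positive integer such that $\nu_k\le\delta$ for all $k\ge k_0(\delta)$. Let $\{x_k\}$ be generated by Algorithm 1, let $\epsilon>0$ and $\delta=\kappa_c\epsilon^2/2$. If $T$ is a positive integer with $$T\ge\max\left\{\frac{2k_0(\delta/2)C}{\delta},\ 1+k_0(\delta/2),\ \frac{2(f(x_0)-f_{low})}{\kappa_c\epsilon^2}\right\},$$ then $\min_{k=0,\dots,T-1}\|\nabla f(x_k)\|\le\epsilon$. In particular, if $M>0$ is a constant, $0\le\nu_0\le M$ and $\nu_k=M/k$ for all $k\ge1$, then $\min_{k=0,\dots,T-1}\|\nabla f(x_k)\|\le\epsilon$ holds whenever $$T\ge\max\left\{\frac{16M^2}{\kappa_c^2\epsilon^4},\ 1+\frac{4M}{\kappa_c\epsilon^2},\ \frac{2(f(x_0)-f_{low})}{\kappa_c\epsilon^2}\right\}.$$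
   Context: Let $(X,\langle\cdot,\cdot\rangle)$ be a real Hilbert space with induced norm $\|\cdot\|$, and $f:X\to\mathbb{R}$ Fréchet differentiable with gradient $\nabla f$. Algorithm 1 (general non-monotone descent algorithm): parameters $x_0\in X$, $\alpha_0>0$, $\beta,\rho\in(0,1)$. For $k=0,1,2,\dots$: choose $d_k\in X$ with $\langle\nabla f(x_k),d_k\rangle<0$; then for $l=0,1,2,\dots$ choose a number $\nu_{k,l}\ge 0$ and test $$f(x_k+\alpha_k\beta^l d_k)\le f(x_k)+\rho\alpha_k\beta^l\langle\nabla f(x_k),d_k\rangle+\nu_{k,l};$$ let $l_k$ be the first $l$ for which this holds, set $\nu_k:=\nu_{k,l_k}$, $x_{k+1}=x_k+\alpha_k\beta^{l_k}d_k$ and $\alpha_{k+1}=\alpha_k\beta^{l_k-1}$. It is assumed the algorithm generates infinite sequences (all $l_k$ finite). Assumptions: A1: $\nabla f$ is Lipschitz continuous with constant $L>0$. A2: there is $f_{low}\in\mathbb{R}$ with $f(x)\ge f_{low}$ for all $x\in X$. A3: there are constants $c_1,c_2>0$ with $\langle\nabla f(x_k),d_k\rangle\le -c_1\|\nabla f(x_k)\|^2$ and $\|d_k\|\le c_2\|\nabla f(x_k)\|$ for all $k$. Constant: $\kappa_c=\min\left\{\rho\beta\alpha_0c_1,\ \frac{2\beta\rho(1-\rho)c_1^2}{Lc_2^2}\right\}$. *)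

From Stdlib Require Import Reals Lra Lia ZArith.
Open Scope R_scope.
Set Implicit Arguments.

Record Hilbert := {
  H :> Type;
  hzero : H;
  hadd : H -> H -> H;
  hopp : H -> H;
  hscal : R -> H -> H;
  inner : H -> H -> R;
  hadd_assoc : forall x y z, hadd x (hadd y z) = hadd (hadd x y) z;
  hadd_comm : forall x y, hadd x y = hadd y x;
  hadd_0 : forall x, hadd x hzero = x;
  hadd_opp : forall x, hadd x (hopp x) = hzero;
  hscal_1 : forall x, hscal 1 x = x;
  hscal_assoc : forall a b x, hscal a (hscal b x) = hscal (a * b) x;
  hscal_distr_l : forall a x y, hscal a (hadd x y) = hadd (hscal a x) (hscal a y);
  hscal_distr_r : forall a b x, hscal (a + b) x = hadd (hscal a x) (hscal b x);
  inner_sym : forall x y, inner x y = inner y x;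
  inner_add_l : forall x y z, inner (hadd x y) z = inner x z + inner y z;
  inner_scal_l : forall a x y, inner (hscal a x) y = a * inner x y;
  inner_pos : forall x, 0 <= inner x x;
  inner_def : forall x, inner x x = 0 -> x = hzero;
  hcomplete : forall u : nat -> H,
    (forall eps, eps > 0 -> exists N, forall m n, (m >= N)%nat -> (n >= N)%nat ->
        sqrt (inner (hadd (u m) (hopp (u n))) (hadd (u m) (hopp (u n)))) < eps) ->
    exists l, forall eps, eps > 0 -> exists N, forall n, (n >= N)%nat ->
        sqrt (inner (hadd (u n) (hopp l)) (hadd (u n) (hopp l))) < eps
}.

Definition hnorm {X : Hilbert} (x : X) : R := sqrt (inner X x x).
Definition hsub {X : Hilbert} (x y : X) : X := hadd X x (hopp X y).

Definition is_gradient (X : Hilbert) (f : X -> R) (g : X -> X) : Prop :=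
  forall x eps, eps > 0 -> exists delta, delta > 0 /\
    forall h : X, hnorm h < delta ->
      Rabs (f (hadd X x h) - f x - inner X (g x) h) <= eps * hnorm h.

(* Algorithm 1 (general non-monotone descent algorithm). nu k l = nu_{k,l},
   lk k = l_k; the accepted value is nu_k = nu k (lk k). *)
Definition algorithm1 (X : Hilbert) (f : X -> R) (g : X -> X)
  (beta rho : R) (x : nat -> X) (d : nat -> X) (alpha : nat -> R)
  (nu : nat -> nat -> R) (lk : nat -> nat) : Prop :=
  alpha 0%nat > 0 /\ 0 < beta < 1 /\ 0 < rho < 1 /\
  forall k,
    inner X (g (x k)) (d k) < 0 /\
    (forall l, 0 <= nu k l) /\
    (f (hadd X (x k) (hscal X (alpha k * beta ^ lk k) (d k)))
       <= f (x k) + rho * (alpha k * beta ^ lk k) * inner X (g (x k)) (d k) + nu k (lk k)) /\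
    (forall l, (l < lk k)%nat ->
       ~ (f (hadd X (x k) (hscal X (alpha k * beta ^ l) (d k)))
          <= f (x k) + rho * (alpha k * beta ^ l) * inner X (g (x k)) (d k) + nu k l)) /\
    x (S k) = hadd X (x k) (hscal X (alpha k * beta ^ lk k) (d k)) /\
    alpha (S k) = alpha k * powerRZ beta (Z.of_nat (lk k) - 1).

Definition kappa_c (alpha0 beta rho c1 c2 L : R) : R :=
  Rmin (rho * beta * alpha0 * c1) (2 * beta * rho * (1 - rho) * c1 ^ 2 / (L * c2 ^ 2)).

(* min_{k = 0..T-1} u k  (meaningful for T >= 1). *)
Fixpoint minseq (u : nat -> R) (T : nat) : R :=
  match T with
  | O => u O
  | S O => u O
  | S ((S _) as n) => Rmin (minseq u n) (u n)
  end.

(* Combining the failed Armijo test with the descent lemma for the L-Lipschitz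
   gradient shows that every accepted step is at least
   beta * min (alpha_0, 2 (1 - rho) c1 / (L c2^2)), so by A3 each iteration
   decreases f by at least kappa_c |grad f (x_k)|^2, up to the error nu_k.
   Telescoping and A2 give
     kappa_c * sum_{k<T} |grad f (x_k)|^2 <= f (x_0) - f_low + sum_{k<T} nu_k.
   The bounds on T make each term on the right at most T kappa_c eps^2 / 2
   (in the second case through sum_{k<T} nu_k <= 2 M sqrt T), hence
   min_{k<T} |grad f (x_k)| <= eps. *)

From Stdlib Require Import Reals Lra Lia ZArith.
From Coquelicot Require Import Coquelicot.
Open Scope R_scope.

Section HilbertFacts.
Variable X : Hilbert.

Lemma inner_0_l (v : X) : inner X (hzero X) v = 0.
Proof.
  pose proof (inner_add_l X (hzero X) (hzero X) v) as E.
  rewrite hadd_0 in E. lra.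
Qed.

Lemma inner_opp_l (a v : X) : inner X (hopp X a) v = - inner X a v.
Proof.
  pose proof (inner_add_l X a (hopp X a) v) as E.
  rewrite hadd_opp, inner_0_l in E. lra.
Qed.

Lemma inner_sub_l (a b v : X) : inner X (hsub a b) v = inner X a v - inner X b v.
Proof. unfold hsub. rewrite inner_add_l, inner_opp_l. ring. Qed.

Lemma inner_add_r (v a b : X) : inner X v (hadd X a b) = inner X v a + inner X v b.
Proof. rewrite !(inner_sym X v), inner_add_l. reflexivity. Qed.

Lemma inner_scal_r t (v a : X) : inner X v (hscal X t a) = t * inner X v a.
Proof. rewrite !(inner_sym X v), inner_scal_l. reflexivity. Qed.

Lemma inner_0_r (v : X) : inner X v (hzero X) = 0.
Proof. rewrite inner_sym. apply inner_0_l. Qed.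

Lemma hscal_0_l (v : X) : hscal X 0 v = hzero X.
Proof.
  assert (Hdouble : hscal X 0 v = hadd X (hscal X 0 v) (hscal X 0 v)).
  { rewrite <- hscal_distr_r. f_equal. ring. }
  rewrite <- (hadd_opp X (hscal X 0 v)).
  rewrite Hdouble at 2. rewrite <- hadd_assoc, hadd_opp, hadd_0. reflexivity.
Qed.

Lemma hadd_hscal_split (y v : X) s t :
  hadd X y (hscal X (s + t) v) = hadd X (hadd X y (hscal X s v)) (hscal X t v).
Proof. rewrite hscal_distr_r, hadd_assoc. reflexivity. Qed.

Lemma hsub_hadd_l (y v : X) : hsub (hadd X y v) y = v.
Proof. unfold hsub. rewrite (hadd_comm X y), <- hadd_assoc, hadd_opp, hadd_0. reflexivity. Qed.

Lemma hnorm_ge0 (v : X) : 0 <= hnorm v.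
Proof. apply sqrt_pos. Qed.

Lemma hnorm_sqr (v : X) : hnorm v * hnorm v = inner X v v.
Proof. apply sqrt_sqrt, inner_pos. Qed.

Lemma hnorm_eq0 (v : X) : hnorm v = 0 -> v = hzero X.
Proof. intros E. apply inner_def. rewrite <- hnorm_sqr, E. ring. Qed.

Lemma hnorm_scal t (v : X) : hnorm (hscal X t v) = Rabs t * hnorm v.
Proof.
  unfold hnorm. rewrite inner_scal_l, inner_scal_r, <- Rmult_assoc.
  rewrite sqrt_mult_alt by apply Rle_0_sqr.
  rewrite <- sqrt_Rsqr_abs. reflexivity.
Qed.

(* The quadratic [t |-> |u + t v|^2] is nonnegative; evaluate it at [t = -<u,v>/|v|^2]. *)
Lemma inner_le_hnorm (u v : X) : inner X u v <= hnorm u * hnorm v.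
Proof.
  destruct (Req_dec (hnorm v) 0) as [Hv0|Hv0].
  { rewrite Hv0, (hnorm_eq0 v Hv0), inner_0_r. lra. }
  set (b := inner X u v).
  assert (Hv : 0 < inner X v v).
  { rewrite <- hnorm_sqr. pose proof (hnorm_ge0 v). nra. }
  assert (Hquad : 0 <= inner X u u - b * b / inner X v v).
  { pose proof (inner_pos X (hadd X u (hscal X (- b / inner X v v) v))) as P.
    rewrite inner_add_l, !inner_add_r, !inner_scal_l, !inner_scal_r,
      (inner_sym X v u) in P.
    fold b in P.
    replace (inner X u u - b * b / inner X v v) with
      (inner X u u + - b / inner X v v * b
       + (- b / inner X v v * b + - b / inner X v v * (- b / inner X v v * inner X v v)))
      by (field; lra).
    exact P. }
  assert (Hbb : b * b <= inner X u u * inner X v v).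
  { apply (Rmult_le_compat_r (inner X v v)) in Hquad; [|lra].
    replace ((inner X u u - b * b / inner X v v) * inner X v v)
      with (inner X u u * inner X v v - b * b) in Hquad by (field; lra).
    lra. }
  unfold hnorm. rewrite <- sqrt_mult_alt by apply inner_pos.
  destruct (Rle_or_lt b 0) as [Hb|Hb].
  - pose proof (sqrt_pos (inner X u u * inner X v v)). lra.
  - rewrite <- (sqrt_square b) by lra. apply sqrt_le_1_alt. lra.
Qed.

End HilbertFacts.

Section Descent.
Variables (X : Hilbert) (f : X -> R) (g : X -> X).
Hypothesis Hgrad : is_gradient X f g.

Lemma derivable_pt_lim_along_line (y v : X) t :
  derivable_pt_lim (fun s => f (hadd X y (hscal X s v))) t
    (inner X (g (hadd X y (hscal X t v))) v).
Proof.
  intros eps Heps.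
  set (z := hadd X y (hscal X t v)).
  set (K := hnorm v + 1).
  assert (Hv : 0 <= hnorm v) by apply hnorm_ge0.
  assert (HK : 0 < K) by (unfold K; lra).
  destruct (Hgrad z (eps / 2 / K)) as [del [Hdel Hz]].
  { apply Rdiv_lt_0_compat; lra. }
  assert (Hdel' : 0 < del / K) by (apply Rdiv_lt_0_compat; lra).
  exists (mkposreal _ Hdel'). simpl. intros h Hh0 Hh.
  rewrite hadd_hscal_split. fold z.
  assert (Hah : 0 < Rabs h) by (apply Rabs_pos_lt; exact Hh0).
  assert (Hsmall : hnorm (hscal X h v) < del).
  { rewrite hnorm_scal. apply Rlt_div_r in Hh; [|lra]. unfold K in Hh. nra. }
  specialize (Hz _ Hsmall). rewrite hnorm_scal, inner_scal_r in Hz.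
  replace ((f (hadd X z (hscal X h v)) - f z) / h - inner X (g z) v)
    with ((f (hadd X z (hscal X h v)) - f z - h * inner X (g z) v) / h)
    by (field; exact Hh0).
  rewrite Rabs_div by exact Hh0.
  apply Rlt_div_l; [lra|].
  assert (Hratio : hnorm v / K < 1) by (apply Rlt_div_l; unfold K; lra).
  assert (E : eps / 2 / K * (Rabs h * hnorm v) = eps / 2 * (hnorm v / K) * Rabs h)
    by (field; lra).
  rewrite E in Hz.
  assert (Hlt : eps / 2 * (hnorm v / K) < eps) by nra.
  apply Rmult_lt_compat_r with (r := Rabs h) in Hlt; [lra | exact Hah].
Qed.

Variable L : R.
Hypothesis Hlip : forall y z : X, hnorm (hsub (g y) (g z)) <= L * hnorm (hsub y z).

(* [t |-> f (y + t v) - t <g y, v> - L t^2 |v|^2 / 2] has nonpositive derivative. *)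
Lemma descent_lemma (y v : X) s : 0 < s ->
  f (hadd X y (hscal X s v)) <= f y + s * inner X (g y) v + L * s ^ 2 * hnorm v ^ 2 / 2.
Proof.
  intros Hs.
  set (N := hnorm v ^ 2).
  set (c := inner X (g y) v).
  set (phi := fun t => f (hadd X y (hscal X t v)) - (t * c + L * (t * t) * N / 2)).
  set (dphi := fun t => inner X (g (hadd X y (hscal X t v))) v - (c + L * t * N)).
  assert (Hd : forall t, derivable_pt_lim phi t (dphi t)).
  { intro t. apply derivable_pt_lim_minus.
    - apply derivable_pt_lim_along_line.
    - apply is_derive_Reals. auto_derive; [trivial|]. field. }
  destruct (MVT_cor2 phi dphi 0 s Hs (fun t _ => Hd t)) as [t [Heq [Ht0 Hts]]].
  assert (Hdphi : dphi t <= 0).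
  { unfold dphi.
    set (z := hadd X y (hscal X t v)).
    assert (Hgv : inner X (g z) v - c = inner X (hsub (g z) (g y)) v)
      by (unfold c; rewrite inner_sub_l; reflexivity).
    pose proof (inner_le_hnorm X (hsub (g z) (g y)) v) as Hcs.
    pose proof (Hlip z y) as Hl.
    unfold z in Hl. rewrite hsub_hadd_l, hnorm_scal, Rabs_right in Hl by lra.
    pose proof (hnorm_ge0 X v).
    assert (hnorm (hsub (g z) (g y)) * hnorm v <= L * (t * hnorm v) * hnorm v)
      by (apply Rmult_le_compat_r; auto).
    unfold N. simpl. nra. }
  assert (Hphi0 : phi 0 = f y) by (unfold phi; rewrite hscal_0_l, hadd_0; field).
  assert (phi s <= f y) by nra.
  unfold phi, N in *. simpl in *. nra.
Qed.

End Descent.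

Fixpoint psum (u : nat -> R) (n : nat) : R :=
  match n with O => 0 | S n => psum u n + u n end.

Lemma psum_telescope_le (F a b : nat -> R) :
  (forall k, F (S k) <= F k - a k + b k) ->
  forall T, F T + psum a T <= F 0%nat + psum b T.
Proof.
  intros Hstep T. induction T as [|T IH]; simpl.
  - lra.
  - pose proof (Hstep T). lra.
Qed.

Lemma psum_le u v T : (forall k, (k < T)%nat -> u k <= v k) -> psum u T <= psum v T.
Proof.
  induction T as [|T IH]; intros Huv; simpl; [lra|].
  assert (psum u T <= psum v T) by (apply IH; intros; apply Huv; lia).
  pose proof (Huv T ltac:(lia)). lra.
Qed.

Lemma psum_lt u v T :
  (0 < T)%nat -> (forall k, (k < T)%nat -> u k < v k) -> psum u T < psum v T.
Proof.
  destruct T as [|T]; intros HT Huv; [lia|]. simpl.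
  assert (psum u T <= psum v T) by (apply psum_le; intros; apply Rlt_le, Huv; lia).
  pose proof (Huv T ltac:(lia)). lra.
Qed.

Lemma psum_const c T : psum (fun _ => c) T = INR T * c.
Proof. induction T as [|T IH]; simpl psum; [simpl; ring | rewrite IH, S_INR; ring]. Qed.

Lemma psum_le_of_eventually_le (u : nat -> R) C k0 dl T :
  0 <= dl -> (forall k, u k <= C) -> (forall k, (k >= k0)%nat -> u k <= dl) ->
  psum u T <= INR (Nat.min T k0) * C + INR T * dl.
Proof.
  intros Hdl0 HC Hdl. induction T as [|T IH]; simpl psum.
  { rewrite Nat.min_0_l. simpl. lra. }
  rewrite S_INR.
  destruct (Nat.lt_ge_cases T k0) as [Hlt|Hge].
  - replace (Nat.min (S T) k0) with (S (Nat.min T k0)) by lia. rewrite S_INR.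
    pose proof (HC T). lra.
  - replace (Nat.min (S T) k0) with (Nat.min T k0) by lia.
    pose proof (Hdl T Hge). lra.
Qed.

Lemma psum_le_of_eventually_small (u : nat -> R) C k0 dl T :
  dl > 0 -> 0 <= C -> (forall k, u k <= C) -> (forall k, (k >= k0)%nat -> u k <= dl / 2) ->
  2 * INR k0 * C / dl <= INR T -> psum u T <= INR T * dl.
Proof.
  intros Hdl HC0 HC Hk0 HT. apply Rle_div_l in HT; [|exact Hdl].
  pose proof (psum_le_of_eventually_le u C k0 (dl / 2) T ltac:(lra) HC Hk0).
  pose proof (le_INR _ _ (Nat.le_min_r T k0)).
  nra.
Qed.

(* [sqrt (n + 1) - sqrt n = 1 / (sqrt (n + 1) + sqrt n)] and [sqrt (n + 1) + sqrt n <= 2 n] once [n >= 2]. *)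
Lemma inv_le_twice_sqrt_succ_sub n : 2 <= n -> / n <= 2 * (sqrt (n + 1) - sqrt n).
Proof.
  intros Hn.
  set (a := sqrt n). set (b := sqrt (n + 1)).
  assert (Ha : a * a = n) by (apply sqrt_sqrt; lra).
  assert (Hb : b * b = n + 1) by (apply sqrt_sqrt; lra).
  assert (Ha0 : 0 <= a) by apply sqrt_pos.
  assert (Hab : a <= b) by (apply sqrt_le_1_alt; lra).
  assert (Hsum : a + b <= 2 * n) by nra.
  assert (Hdiff : (b - a) * (b + a) = 1) by nra.
  apply (Rmult_le_reg_l n); [lra|]. rewrite Rinv_r by lra. nra.
Qed.

Lemma psum_harmonic_le (u : nat -> R) M T :
  M > 0 -> u 0%nat <= M -> (forall k, (k >= 1)%nat -> u k = M / INR k) ->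
  (1 <= T)%nat -> psum u T <= 2 * M * sqrt (INR T).
Proof.
  intros HM H0 Hk HT. induction T as [|T IH]; [lia|].
  destruct (Nat.lt_ge_cases T 2) as [Hsmall|Hlarge].
  - destruct T as [|[|T]]; [| |lia]; simpl psum.
    + simpl INR. rewrite sqrt_1. lra.
    + rewrite (Hk 1%nat) by lia. simpl INR.
      pose proof (sqrt_le_1_alt 1 (1 + 1) ltac:(lra)) as Hsqrt2. rewrite sqrt_1 in Hsqrt2.
      unfold Rdiv. rewrite Rinv_1. nra.
  - simpl psum. rewrite (Hk T) by lia. rewrite S_INR.
    assert (HT2 : 2 <= INR T) by (apply (le_INR 2); lia).
    pose proof (inv_le_twice_sqrt_succ_sub (INR T) HT2).
    specialize (IH ltac:(lia)). unfold Rdiv. nra.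
Qed.

Lemma psum_harmonic_le_budget (u : nat -> R) M K T :
  M > 0 -> K > 0 -> u 0%nat <= M -> (forall k, (k >= 1)%nat -> u k = M / INR k) ->
  (1 <= T)%nat -> 16 * M ^ 2 / K ^ 2 <= INR T -> psum u T <= INR T * (K / 2).
Proof.
  intros HM HK H0 Hk HT HMT.
  assert (HsqrtT : 4 * M / K <= sqrt (INR T)).
  { rewrite <- (sqrt_square (4 * M / K)) by (apply Rlt_le, Rdiv_lt_0_compat; lra).
    apply sqrt_le_1_alt.
    replace (4 * M / K * (4 * M / K)) with (16 * M ^ 2 / K ^ 2) by (field; lra).
    exact HMT. }
  apply Rle_div_l in HsqrtT; [|exact HK].
  pose proof (psum_harmonic_le u M T HM H0 Hk HT).
  pose proof (sqrt_sqrt (INR T) (pos_INR T)).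
  pose proof (sqrt_pos (INR T)).
  nra.
Qed.

Lemma kappa_c_eq a0 beta rho c1 c2 L :
  0 < beta -> 0 < rho -> c1 > 0 -> c2 > 0 -> L > 0 ->
  kappa_c a0 beta rho c1 c2 L = rho * beta * c1 * Rmin a0 (2 * (1 - rho) * c1 / (L * c2 ^ 2)).
Proof.
  intros Hb Hr Hc1 Hc2 HL. unfold kappa_c.
  rewrite Rmult_min_distr_l by (apply Rlt_le; repeat apply Rmult_lt_0_compat; lra).
  f_equal; [ring|]. field. split; lra.
Qed.

Lemma kappa_c_pos a0 beta rho c1 c2 L :
  0 < a0 -> 0 < beta -> 0 < rho < 1 -> c1 > 0 -> c2 > 0 -> L > 0 ->
  0 < kappa_c a0 beta rho c1 c2 L.
Proof.
  intros Ha Hb [Hr0 Hr1] Hc1 Hc2 HL. rewrite kappa_c_eq by lra.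
  repeat apply Rmult_lt_0_compat; try lra.
  apply Rmin_glb_lt; [lra|].
  apply Rdiv_lt_0_compat; [nra|]. apply Rmult_lt_0_compat; [lra | apply pow_lt; lra].
Qed.

Section Algorithm1.
Variables (X : Hilbert) (f : X -> R) (g : X -> X) (beta rho : R) (x d : nat -> X)
  (alpha : nat -> R) (nu : nat -> nat -> R) (lk : nat -> nat) (L flow c1 c2 : R).
Hypothesis Hgrad : is_gradient X f g.
Hypothesis Halg : algorithm1 X f g beta rho x d alpha nu lk.
Hypothesis HL : L > 0.
Hypothesis Hlip : forall y z : X, hnorm (hsub (g y) (g z)) <= L * hnorm (hsub y z).
Hypothesis Hlow : forall y : X, f y >= flow.
Hypotheses (Hc1 : c1 > 0) (Hc2 : c2 > 0).
Hypothesis HA3 : forall k, inner X (g (x k)) (d k) <= - c1 * hnorm (g (x k)) ^ 2 /\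
                           hnorm (d k) <= c2 * hnorm (g (x k)).

Let step_threshold := 2 * (1 - rho) * c1 / (L * c2 ^ 2).

Lemma min_step_pos : 0 < Rmin (alpha 0%nat) step_threshold.
Proof.
  destruct Halg as [Ha0 [_ [[Hr0 Hr1] _]]].
  apply Rmin_glb_lt; [exact Ha0|].
  apply Rdiv_lt_0_compat; [nra|]. apply Rmult_lt_0_compat; [lra | apply pow_lt; lra].
Qed.

Lemma alpha_pos k : 0 < alpha k.
Proof.
  destruct Halg as [Ha0 [[Hb0 _] [_ Hk]]].
  induction k as [|k IH]; [exact Ha0|].
  destruct (Hk k) as [_ [_ [_ [_ [_ ->]]]]].
  apply Rmult_lt_0_compat; [exact IH | apply powerRZ_lt; lra].
Qed.

Lemma grad_norm_pos k : 0 < hnorm (g (x k)).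
Proof.
  destruct Halg as [_ [_ [_ Hk]]]. destruct (Hk k) as [Hdesc _].
  destruct (Rle_lt_or_eq_dec _ _ (hnorm_ge0 X (g (x k)))) as [Hpos|Hzero]; [exact Hpos|].
  rewrite (hnorm_eq0 X _ (eq_sym Hzero)), inner_0_l in Hdesc. lra.
Qed.

(* A rejected trial step violates the Armijo test, which the descent lemma
   makes impossible below [step_threshold]. *)
Lemma rejected_step_gt k l : S l = lk k -> step_threshold < alpha k * beta ^ l.
Proof.
  intros Hl.
  destruct Halg as [_ [[Hb0 _] [[Hr0 Hr1] Hk]]].
  destruct (Hk k) as [_ [Hnu [_ [Hrej _]]]].
  destruct (HA3 k) as [Hgd Hnd].
  set (s := alpha k * beta ^ l).
  assert (Hs : 0 < s) by (apply Rmult_lt_0_compat; [apply alpha_pos | apply pow_lt; lra]).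
  pose proof (Hrej l ltac:(lia)) as Hfail. fold s in Hfail.
  pose proof (descent_lemma X f g Hgrad L Hlip (x k) (d k) s Hs) as Hdesc.
  pose proof (Hnu l) as Hnul.
  pose proof (grad_norm_pos k) as HG.
  set (G := hnorm (g (x k))) in *. set (gd := inner X (g (x k)) (d k)) in *.
  set (nd := hnorm (d k)) in *.
  assert (Hnd0 : 0 <= nd) by apply hnorm_ge0.
  assert (Hsgd : (1 - rho) * (- gd) < L * s * nd ^ 2 / 2).
  { apply (Rmult_lt_reg_l s); [exact Hs|]. nra. }
  assert (Hnd2 : nd ^ 2 <= c2 ^ 2 * G ^ 2) by nra.
  assert (HG2 : 0 < G ^ 2) by (apply pow_lt; exact HG).
  assert (Hmain : 2 * (1 - rho) * c1 < s * (L * c2 ^ 2)).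
  { assert (L * s * nd ^ 2 <= L * s * (c2 ^ 2 * G ^ 2))
      by (apply Rmult_le_compat_l; [nra | exact Hnd2]).
    nra. }
  apply Rlt_div_l; [apply Rmult_lt_0_compat; [lra | apply pow_lt; lra] | exact Hmain].
Qed.

Lemma alpha_ge_min k : Rmin (alpha 0%nat) step_threshold <= alpha k.
Proof.
  destruct Halg as [_ [[Hb0 Hb1] [_ Hk]]].
  induction k as [|k IH]; [apply Rmin_l|].
  destruct (Hk k) as [_ [_ [_ [_ [_ ->]]]]].
  destruct (lk k) as [|l] eqn:El.
  - assert (alpha k <= alpha k * powerRZ beta (Z.of_nat 0 - 1)).
    { replace (alpha k * powerRZ beta (Z.of_nat 0 - 1)) with (alpha k / beta)
        by (simpl; field; lra).
      pose proof (alpha_pos k). apply Rle_div_r; [lra|]. nra. }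
    lra.
  - replace (Z.of_nat (S l) - 1)%Z with (Z.of_nat l) by lia.
    rewrite <- pow_powerRZ.
    pose proof (rejected_step_gt k l (eq_sym El)).
    pose proof (Rmin_r (alpha 0%nat) step_threshold). lra.
Qed.

Lemma accepted_step_ge k :
  beta * Rmin (alpha 0%nat) step_threshold <= alpha k * beta ^ lk k.
Proof.
  destruct Halg as [_ [[Hb0 Hb1] _]].
  destruct (lk k) as [|l] eqn:El.
  - pose proof (alpha_ge_min k). pose proof min_step_pos. simpl. nra.
  - pose proof (rejected_step_gt k l (eq_sym El)).
    pose proof (Rmin_r (alpha 0%nat) step_threshold).
    replace (alpha k * beta ^ S l) with (beta * (alpha k * beta ^ l)) by (simpl; ring).
    apply Rmult_le_compat_l; lra.
Qed.

Lemma sufficient_decrease k :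
  f (x (S k)) <= f (x k) - kappa_c (alpha 0%nat) beta rho c1 c2 L * hnorm (g (x k)) ^ 2
                 + nu k (lk k).
Proof.
  destruct Halg as [_ [[Hb0 Hb1] [[Hr0 Hr1] Hk]]].
  destruct (Hk k) as [_ [_ [Hacc [_ [-> _]]]]].
  destruct (HA3 k) as [Hgd _].
  rewrite kappa_c_eq by lra. fold step_threshold.
  pose proof (accepted_step_ge k) as Ht.
  set (t := alpha k * beta ^ lk k) in *.
  set (G2 := hnorm (g (x k)) ^ 2) in *.
  assert (HG2 : 0 <= G2) by (apply pow_le, hnorm_ge0).
  assert (rho * t * inner X (g (x k)) (d k) <= - (rho * t * c1 * G2)).
  { assert (0 < rho * t) by (pose proof min_step_pos; apply Rmult_lt_0_compat; nra).
    nra. }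
  assert (rho * beta * c1 * Rmin (alpha 0%nat) step_threshold * G2 <= rho * t * c1 * G2).
  { replace (rho * beta * c1 * Rmin (alpha 0%nat) step_threshold * G2)
      with (rho * c1 * G2 * (beta * Rmin (alpha 0%nat) step_threshold)) by ring.
    replace (rho * t * c1 * G2) with (rho * c1 * G2 * t) by ring.
    apply Rmult_le_compat_l; [|exact Ht]. apply Rmult_le_pos; [nra | exact HG2]. }
  lra.
Qed.

Lemma kappa_c_psum_grad_le T :
  kappa_c (alpha 0%nat) beta rho c1 c2 L * psum (fun k => hnorm (g (x k)) ^ 2) T
  <= f (x 0%nat) - flow + psum (fun k => nu k (lk k)) T.
Proof.
  set (kc := kappa_c (alpha 0%nat) beta rho c1 c2 L).
  assert (Hpsum_scal : forall u n, psum (fun k => kc * u k) n = kc * psum u n).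
  { intros u n. induction n as [|n IH]; simpl; [ring | rewrite IH; ring]. }
  pose proof (psum_telescope_le (fun k => f (x k)) (fun k => kc * hnorm (g (x k)) ^ 2)
                (fun k => nu k (lk k)) sufficient_decrease T) as Htel.
  rewrite Hpsum_scal in Htel. pose proof (Hlow (x T)). lra.
Qed.

End Algorithm1.

Lemma minseq_le u T k : (k < T)%nat -> minseq u T <= u k.
Proof.
  revert k. induction T as [|T IH]; intros k Hk; [lia|].
  destruct T as [|T].
  - replace k with 0%nat by lia. simpl. lra.
  - change (minseq u (S (S T))) with (Rmin (minseq u (S T)) (u (S T))).
    destruct (Nat.eq_dec k (S T)) as [->|Hne].
    + apply Rmin_r.
    + eapply Rle_trans; [apply Rmin_l | apply IH; lia].
Qed.

Lemma minseq_le_of_psum_sqr_le (u : nat -> R) kc eps T :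
  kc > 0 -> eps > 0 -> (0 < T)%nat -> (forall k, 0 <= u k) ->
  kc * psum (fun k => u k ^ 2) T <= INR T * (kc * eps ^ 2) ->
  minseq u T <= eps.
Proof.
  intros Hkc Heps HT Hu Hsum.
  destruct (Rle_or_lt (minseq u T) eps) as [Hle|Hgt]; [exact Hle|]. exfalso.
  assert (Hlt : psum (fun _ => eps ^ 2) T < psum (fun k => u k ^ 2) T).
  { apply psum_lt; [exact HT|]. intros k Hk.
    pose proof (minseq_le u T k Hk). pose proof (Hu k). simpl. nra. }
  rewrite psum_const in Hlt.
  apply (Rmult_lt_compat_l kc) in Hlt; [lra | exact Hkc].
Qed.

Lemma Rmax3_ge t a b c : t >= Rmax (Rmax a b) c -> a <= t /\ b <= t /\ c <= t.
Proof.
  intros Ht. pose proof (Rmax_l (Rmax a b) c). pose proof (Rmax_r (Rmax a b) c).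
  pose proof (Rmax_l a b). pose proof (Rmax_r a b). lra.
Qed.

Theorem corollary2 (X : Hilbert) (f : X -> R) (g : X -> X)
  (beta rho : R) (x d : nat -> X) (alpha : nat -> R)
  (nu : nat -> nat -> R) (lk : nat -> nat)
  (L flow c1 c2 : R) :
  is_gradient X f g ->
  algorithm1 X f g beta rho x d alpha nu lk ->
  (* A1 *)
  L > 0 -> (forall y z : X, hnorm (hsub (g y) (g z)) <= L * hnorm (hsub y z)) ->
  (* A2 *)
  (forall y : X, f y >= flow) ->
  (* A3 *)
  c1 > 0 -> c2 > 0 ->
  (forall k, inner X (g (x k)) (d k) <= - c1 * (hnorm (g (x k))) ^ 2 /\
             hnorm (d k) <= c2 * hnorm (g (x k))) ->
  let kc := kappa_c (alpha 0%nat) beta rho c1 c2 L in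
  let nuk := fun k => nu k (lk k) in
  (forall (C : R) (k0 : R -> nat) (eps : R) (T : nat),
     Un_cv nuk 0 ->
     C > 0 -> (forall k, nuk k <= C) ->
     (forall dl, dl > 0 -> (0 < k0 dl)%nat /\ forall k, (k >= k0 dl)%nat -> nuk k <= dl) ->
     eps > 0 ->
     let delta := kc * eps ^ 2 / 2 in
     (0 < T)%nat ->
     INR T >= Rmax (Rmax (2 * INR (k0 (delta / 2)) * C / delta) (1 + INR (k0 (delta / 2))))
                   (2 * (f (x 0%nat) - flow) / (kc * eps ^ 2)) ->
     minseq (fun k => hnorm (g (x k))) T <= eps)
  /\
  (forall (M eps : R) (T : nat),
     M > 0 -> 0 <= nuk 0%nat <= M -> (forall k, (k >= 1)%nat -> nuk k = M / INR k) ->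
     eps > 0 ->
     (0 < T)%nat ->
     INR T >= Rmax (Rmax (16 * M ^ 2 / (kc ^ 2 * eps ^ 4)) (1 + 4 * M / (kc * eps ^ 2)))
                   (2 * (f (x 0%nat) - flow) / (kc * eps ^ 2)) ->
     minseq (fun k => hnorm (g (x k))) T <= eps).
Proof.
  intros Hgrad Halg HL Hlip Hlow Hc1 Hc2 HA3 kc nuk.
  pose proof (kappa_c_psum_grad_le X f g beta rho x d alpha nu lk L flow c1 c2
                Hgrad Halg HL Hlip Hlow Hc1 Hc2 HA3) as Hsum.
  fold kc nuk in Hsum.
  assert (Hkc : kc > 0).
  { destruct Halg as [Ha0 [[Hb0 _] [Hr _]]]. apply kappa_c_pos; assumption. }
  assert (HK : forall eps, eps > 0 -> kc * eps ^ 2 > 0)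
    by (intros eps Heps; apply Rmult_gt_0_compat; [exact Hkc | apply pow_lt; lra]).
  split.
  -
    intros C k0 eps T _ HC HCb Hk0 Heps delta HT HTb.
    destruct (Rmax3_ge _ _ _ _ HTb) as [Hk0C [_ Hf0]].
    apply Rle_div_l in Hf0; [|apply HK, Heps].
    assert (Hdelta : delta > 0) by (unfold delta; pose proof (HK eps Heps); lra).
    destruct (Hk0 (delta / 2) ltac:(lra)) as [_ Hk0'].
    pose proof (psum_le_of_eventually_small nuk C _ delta T Hdelta ltac:(lra) HCb Hk0' Hk0C).
    apply (minseq_le_of_psum_sqr_le _ kc eps T Hkc Heps HT (fun k => hnorm_ge0 X _)).
    specialize (Hsum T). unfold delta in *. nra.
  - intros M eps T HM [_ Hnu0] Hk Heps HT HTb.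
    destruct (Rmax3_ge _ _ _ _ HTb) as [HMT [_ Hf0]].
    apply Rle_div_l in Hf0; [|apply HK, Heps].
    replace (kc ^ 2 * eps ^ 4) with ((kc * eps ^ 2) ^ 2) in HMT by ring.
    pose proof (psum_harmonic_le_budget nuk M _ T HM (HK eps Heps) Hnu0 Hk ltac:(lia) HMT).
    apply (minseq_le_of_psum_sqr_le _ kc eps T Hkc Heps HT (fun k => hnorm_ge0 X _)).
    specialize (Hsum T). nra.
Qed.
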